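(* Let $R$ be a finite Frobenius ring and let $\psi$ be a primitive additive character of $R$. Let $a,b\in R$. For each principal ideal $D$ of $R$ with $(a)\subseteq D$ and $(b)\subseteq D$, choose a generator $d$ of $D$ and elements $a_0,b_0\in R$ with $a=da_0$, $b=db_0$, and define $$T_D=\sum_{v\in (R/d^\perp)^\times}\psi\big(d\tilde v\big)\,\psi\big(d\,a_0b_0\,\tilde v^{-1}\big)$$ if $d\neq 0$, where $\tilde v\in R^\times$ is any lift of $v$ (so the summand is $K(d.\psi,(a_0b_0).(d.\psi))$ computed over the quotient ring $R/d^\perp$, on which $d.\psi$ is a well-defined primitive character), and $T_D=1$ if $D=(0)$ (this case only occurs when $a=b=0$; it corresponds to the Kloosterman sum over the zero ring). Then $T_D$ and $|d^\perp|$ do not depend on the choices made, and $$\sum_{u\in R^\times}\psi(au+bu^{-1})=\sum_{\substack{D=(d)\text{ principal}\\ (a),(b)\subseteq D}} |d^\perp|\;T_D .$$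
   Context: All rings are finite and commutative with identity; $R^\times$ denotes the unit group. An additive character of $R$ is a group homomorphism $(R,+)\to\mathbb{C}^*$; for $c\in R$ and an additive character $\psi$, $c.\psi$ denotes the character $r\mapsto\psi(cr)$. The conductor of an additive character is the largest ideal on which it is identically $1$; a character is primitive if its conductor is the zero ideal. $R$ is called Frobenius if it admits a primitive additive character. For an ideal $I$ (or element $d$), $I^\perp=\{r\in R: rx=0\ \forall x\in I\}$ and $d^\perp=(d)^\perp$. For additive characters $\phi,\psi$ of a finite ring $S$, the Kloosterman sum is $K(\phi,\psi)=\sum_{u\in S^\times}\phi(u)\psi(u^{-1})$. *)

From HB Require Import structures.
From mathcomp Require Import all_boot all_order all_algebra all_field.
Set Implicit Arguments. Unset Strict Implicit. Unset Printing Implicit Defensive.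
Import Order.TTheory GRing.Theory Num.Theory.
Local Open Scope ring_scope.

Section Defs.
Variable R : finComUnitRingType.

Definition additive_char (psi : R -> algC) : Prop :=
  (forall x y, psi (x + y) = psi x * psi y) /\ (forall x, psi x != 0).

Definition is_ideal (I : {set R}) : Prop :=
  0 \in I /\ (forall x y, x \in I -> y \in I -> x + y \in I) /\
  (forall r x, x \in I -> r * x \in I).

Definition primitive_char (psi : R -> algC) : Prop :=
  additive_char psi /\
  forall I : {set R}, is_ideal I -> (forall x, x \in I -> psi x = 1) -> I = [set 0].

Definition Frobenius : Prop := exists psi, primitive_char psi.

Definition pideal (d : R) : {set R} := [set d * r | r : R].

Definition principal (D : {set R}) : bool := [exists d, D == pideal d].

Definition perp (I : {set R}) : {set R} := [set r | [forall x in I, r * x == 0]].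

Definition dperp (d : R) : {set R} := perp (pideal d).

(* cosets x + d^perp, i.e. elements of R / d^perp *)
Definition qcoset (d x : R) : {set R} := [set x + t | t in dperp d].

(* units of R / d^perp, as cosets *)
Definition qunits (d : R) : {set {set R}} :=
  [set qcoset d x | x in [set x : R | [exists y : R, x * y - 1 \in dperp d]]].

(* a lift in R^x of a coset (exists for units of the quotient) *)
Definition qlift (C : {set R}) : R :=
  odflt 0 [pick u in C | u \is a GRing.unit].

Definition T (psi : R -> algC) (d a0 b0 : R) : algC :=
  if d == 0 then 1 else
  \sum_(C in qunits d) psi (d * qlift C) * psi (d * (a0 * b0) * (qlift C)^-1).

End Defs.

From HB Require Import structures.
From mathcomp Require Import all_boot all_order all_algebra all_field.
From mathcomp Require Import ring zify.
Import Order.TTheory GRing.Theory Num.Theory.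
Local Open Scope ring_scope.

(* Substituting x = b u^-1, b1 = u, the left-hand side becomes the sum of
   psi (x + a b1) over all pairs with x b1 = b, provided the pairs with b1 a
   non-unit cancel; they do, since psi is nontrivial on the nonzero ideal
   ann(b1). For fixed x the sum over b1 is empty unless (b) <= (x), and it
   cancels unless (a) <= (x): psi being primitive, ann(ann(x)) = (x), so
   otherwise psi is nontrivial on a.ann(x). Grouping the remaining x by the
   ideal D = (x) = (d): the generators of D are the d u with u a unit lifting
   a unit of R/d^perp, and the solutions of d u b1 = b form a coset of d^perp
   on which the summand is psi (d u) psi (d a0 b0 u^-1). *)

Section PrincipalIdeals.
Context {R : finComUnitRingType}.
Implicit Types a d x y z : R.

Lemma pidealP d y : reflect (exists s, y = d * s) (y \in pideal d).
Proof. by apply: (iffP imsetP) => [[s _ ->]|[s ->]]; exists s. Qed.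

Lemma pideal_ideal d : is_ideal (pideal d).
Proof.
split; first by apply/pidealP; exists 0; rewrite mulr0.
split=> [x y /pidealP[s ->] /pidealP[t ->]|r x /pidealP[s ->]]; apply/pidealP.
  by exists (s + t); rewrite mulrDr.
by exists (r * s); rewrite mulrCA.
Qed.

Lemma pideal_subP a x : reflect (exists s, a = x * s) (pideal a \subset pideal x).
Proof.
apply: (iffP idP) => [/subsetP sub_ax|[s ->]].
  by apply/pidealP/sub_ax/pidealP; exists 1; rewrite mulr1.
by apply/subsetP=> y /pidealP[r ->]; apply/pidealP; exists (s * r); rewrite mulrA.
Qed.

Lemma mul_ann_ideal a x : is_ideal [set a * t | t in [set t | x * t == 0]].
Proof.
split; first by apply/imsetP; exists 0; rewrite ?inE mulr0.
split=> [y z /imsetP[s xs ->] /imsetP[t xt ->]|r y /imsetP[s xs ->]].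
  apply/imsetP; exists (s + t); last by rewrite mulrDr.
  by move: xs xt; rewrite !inE mulrDr => /eqP-> /eqP->; rewrite addr0.
apply/imsetP; exists (r * s); last by rewrite mulrCA.
by move: xs; rewrite !inE mulrCA => /eqP->; rewrite mulr0.
Qed.

Lemma dperpP d r : (r \in dperp d) = (r * d == 0).
Proof.
rewrite inE; apply/forall_inP/eqP => [ann_d|rd0 y /pidealP[s ->]].
  by apply/eqP/ann_d/pidealP; exists 1; rewrite mulr1.
by rewrite mulrA rd0 mul0r.
Qed.

Lemma qcosetP d x z : (z \in qcoset d x) = ((z - x) * d == 0).
Proof.
apply/imsetP/idP => [[t dt ->]|zx]; first by rewrite addrC addKr -dperpP.
by exists (z - x); rewrite ?dperpP // addrC subrK.
Qed.

Lemma exists_idempotent_power (m : R) :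
  exists2 n, (0 < n)%N & m ^+ (n + n) = m ^+ n.
Proof.
have [i [j [lt_ij Eij]]] : exists i j, (i < j)%N /\ m ^+ i = m ^+ j.
  have /injectivePn[i [j ne_ij Eij]] : ~~ injectiveb (fun k : 'I_#|R|.+1 => m ^+ k).
    by apply/injectiveP => /leq_card; rewrite card_ord ltnn.
  case: (ltngtP i j) => [lt_ij|lt_ji|/val_inj eq_ij]; last by rewrite eq_ij eqxx in ne_ij.
  - by exists i, j.
  - by exists j, i.
set p := (j - i)%N.
have periodic k q : (i <= k)%N -> m ^+ (k + q * p) = m ^+ k.
  move=> le_ik; elim: q => [|q IHq]; first by rewrite addn0.
  have -> : (k + q.+1 * p = (k + q * p - i) + j)%N by rewrite /p; nia.
  by rewrite exprD -Eij -exprD subnK ?IHq // (leq_trans le_ik) ?leq_addr.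
exists (i.+1 * p)%N; first by rewrite muln_gt0 subn_gt0 lt_ij.
by rewrite periodic // /p; nia.
Qed.

(* With e = (x y)^n idempotent, e d = d since x y = 1 modulo ann(d); then
   u = 1 - e + e x is congruent to x and has inverse w e + 1 - e, where
   w = y (x y)^(n-1) satisfies x w = e. *)
Lemma lift_unit_mod_ann x y d :
  (x * y - 1) * d = 0 -> exists2 u, u \is a GRing.unit & (u - x) * d = 0.
Proof.
move=> xy_d; set m := x * y in xy_d.
have [n n_gt0 idem] := exists_idempotent_power m; set e := m ^+ n in idem.
have ee : e * e = e by rewrite -exprD.
have ed : (1 - e) * d = 0.
  have md1 : m * d = d by apply/eqP; rewrite -subr_eq0 -{2}[d]mul1r -mulrBl xy_d.
  have md k : m ^+ k * d = d.
    by elim: k => [|k IHk]; rewrite ?mul1r // exprS -mulrA IHk md1.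
  by rewrite mulrBl mul1r md subrr.
set w := y * m ^+ n.-1.
have xw : x * w = e by rewrite /w mulrA -exprS prednK.
exists (1 - e + e * x).
  apply/unitrPr; exists (w * e + 1 - e).
  have -> : (1 - e + e * x) * (w * e + 1 - e) =
      1 + (e * e - e) * (2 + e - w - x) + e * e * (x * w - e) by ring.
  by rewrite ee xw !subrr mulr0 mul0r !addr0.
have -> : 1 - e + e * x - x = (1 - e) * (1 - x) by ring.
by rewrite mulrAC ed mul0r.
Qed.

Lemma qunitsP {d C} :
  C \in qunits d -> exists x y, (x * y - 1) * d = 0 /\ C = qcoset d x.
Proof.
case/imsetP=> x; rewrite inE => /existsP[y]; rewrite dperpP => /eqP xy_d ->.
by exists x, y.
Qed.

Lemma qlift_unit {d C} : C \in qunits d -> qlift C \is a GRing.unit /\ qlift C \in C.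
Proof.
case/qunitsP=> x [y [/lift_unit_mod_ann[u uU ux] ->]].
rewrite /qlift; case: pickP => [v /andP[] //|no_unit].
by have := no_unit u; rewrite [u \in _]qcosetP ux eqxx uU.
Qed.

Lemma mul_qlift {d x C} : C \in qunits d -> C = qcoset d x -> d * qlift C = d * x.
Proof.
move=> /qlift_unit[_ + ] E; rewrite {2}E qcosetP mulrBl subr_eq0 => /eqP.
by rewrite mulrC [x * d]mulrC.
Qed.

Lemma qlift_mul_inj d : {in qunits d &, injective (fun C => d * qlift C)}.
Proof.
move=> C1 C2 C1d C2d /= eq_dC.
have [x1 [_ [_ E1]]] := qunitsP C1d; have [x2 [_ [_ E2]]] := qunitsP C2d.
rewrite E1 E2; apply/setP=> z; rewrite !qcosetP !mulrBl [x1 * d]mulrC [x2 * d]mulrC.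
by rewrite -(mul_qlift C1d E1) -(mul_qlift C2d E2) eq_dC.
Qed.

Lemma pideal_generators d :
  [set x | pideal x == pideal d] = [set d * qlift C | C in qunits d].
Proof.
apply/setP=> x; rewrite inE eqEsubset.
apply/andP/imsetP => [[/pideal_subP[v ->] /pideal_subP[w dw]]|[C Cd ->]].
  have vw_d : (v * w - 1) * d = 0.
    by rewrite mulrBl mul1r mulrC mulrA -dw subrr.
  have Cd : qcoset d v \in qunits d.
    apply/imsetP; exists v; rewrite // inE.
    by apply/existsP; exists w; rewrite dperpP vw_d.
  by exists (qcoset d v); rewrite // (mul_qlift Cd erefl).
have [x0 [y [xy_d E]]] := qunitsP Cd.
rewrite (mul_qlift Cd E); split; apply/pideal_subP; first by exists x0.
by exists y; apply/esym/eqP; rewrite -subr_eq0 -xy_d; apply/eqP; ring.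
Qed.

Lemma qunits0 : qunits (0 : R) = [set setT].
Proof.
have qcoset0 x : qcoset 0 x = setT by apply/setP=> z; rewrite qcosetP mulr0 eqxx inE.
apply/setP=> C; rewrite !inE; apply/imsetP/eqP => [[x _ ->] //|->].
by exists 1; rewrite // inE; apply/existsP; exists 1; rewrite dperpP mulr0.
Qed.

End PrincipalIdeals.

Lemma sum_char_translate_eq0 {V : finZmodType} {F : idomainType}
    {g : V -> F} {P : pred V} {t : V} :
  {morph g : x y / x + y >-> x * y} -> (forall c, P (c + t) = P c) ->
  g t != 1 -> \sum_(c | P c) g c = 0.
Proof.
move=> gD Pt gt_neq1.
have sum_gt : \sum_(c | P c) g c = g t * \sum_(c | P c) g c.
  rewrite {1}(reindex_inj (addIr t)) /= mulr_sumr.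
  by under eq_bigl do rewrite Pt; apply: eq_bigr => c _; rewrite gD mulrC.
have : (1 - g t) * \sum_(c | P c) g c = 0 by rewrite mulrBl mul1r -sum_gt subrr.
by move/eqP; rewrite mulf_eq0 subr_eq0 eq_sym (negbTE gt_neq1) => /eqP.
Qed.

Section AdditiveCharacter.
Context {R : finComUnitRingType} {psi : R -> algC}.
Hypothesis psi_char : additive_char psi.

Let psiD : {morph psi : x y / x + y >-> x * y} := psi_char.1.

Lemma additive_char0 : psi 0 = 1.
Proof. by apply: (mulfI (psi_char.2 0)); rewrite -psiD addr0 mulr1. Qed.

Lemma sum_fiber_unit (a b d a0 b0 u : R) :
  u \is a GRing.unit -> a = d * a0 -> b = d * b0 ->
  \sum_(b1 | d * u * b1 == b) psi (d * u + a * b1) =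
  #|dperp d|%:R * (psi (d * u) * psi (d * (a0 * b0) * u^-1)).
Proof.
move=> uU -> ->.
have fiber_const b1 : d * u * b1 == d * b0 ->
    psi (d * u + d * a0 * b1) = psi (d * u) * psi (d * (a0 * b0) * u^-1).
  move=> /eqP db1; rewrite psiD; congr (_ * psi _).
  have -> : d * (a0 * b0) = d * a0 * b1 * u by rewrite mulrCA -db1; ring.
  by rewrite mulrK.
rewrite (eq_bigr _ fiber_const) sumr_const mulr_natl; congr (_ *+ _).
have -> : dperp d = [set u * b1 - b0 | b1 in [set b1 | d * u * b1 == d * b0]].
  apply/setP=> t; rewrite dperpP; apply/eqP/imsetP => [td|[b1]].
    exists (u^-1 * (t + b0)); last by rewrite mulVKr // addrK.
    by rewrite inE -mulrA mulVKr // mulrDr [d * t]mulrC td add0r.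
  by rewrite inE => /eqP db1 ->; rewrite mulrBl mulrC mulrA db1 mulrC subrr.
rewrite card_imset => [|b1 b2 /addIr/(mulrI uU)//].
by apply: eq_card => b1; rewrite inE.
Qed.

Lemma T_sum d a0 b0 :
  T psi d a0 b0 =
  \sum_(C in qunits d) psi (d * qlift C) * psi (d * (a0 * b0) * (qlift C)^-1).
Proof.
rewrite /T; case: eqP => // ->.
by rewrite qunits0 big_set1 !mul0r additive_char0 mulr1.
Qed.

Lemma sum_generators {a b d a0 b0 : R} : a = d * a0 -> b = d * b0 ->
  \sum_(x | pideal x == pideal d) \sum_(b1 | x * b1 == b) psi (x + a * b1) =
  #|dperp d|%:R * T psi d a0 b0.
Proof.
move=> Ea Eb.
rewrite (eq_bigl (fun x => x \in [set x | pideal x == pideal d])) => [|x]; last first.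
  by rewrite inE.
rewrite pideal_generators big_imset; last exact: qlift_mul_inj.
rewrite T_sum mulr_sumr; apply: eq_bigr => C /qlift_unit[uU _].
exact: sum_fiber_unit.
Qed.

End AdditiveCharacter.

Section PrimitiveCharacter.
Context {R : finComUnitRingType} {psi : R -> algC}.
Implicit Types a b x y : R.
Hypothesis psi_prim : primitive_char psi.

Let psi_char : additive_char psi := psi_prim.1.
Let psiD : {morph psi : x y / x + y >-> x * y} := psi_char.1.

Let psi_scaleD a : {morph (fun r => psi (a * r)) : x y / x + y >-> x * y}.
Proof. by move=> x y /=; rewrite mulrDr psiD. Qed.

Lemma primitive_char_nonconst {I : {set R}} :
  is_ideal I -> I != [set 0] -> exists2 t, t \in I & psi t != 1.
Proof.
move=> I_ideal I_neq0; have [/existsP[t /andP[tI psi_t]]|/existsPn psi1] :=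
  boolP [exists t, (t \in I) && (psi t != 1)]; first by exists t.
exfalso; move/eqP: I_neq0; apply; apply: psi_prim.2 => // t tI.
by apply/eqP; have := psi1 t; rewrite tI negbK.
Qed.

Lemma sum_char_mul y : \sum_(r : R) psi (y * r) = if y == 0 then #|R|%:R else 0.
Proof.
case: eqP => [->|/eqP y_neq0].
  by under eq_bigr do rewrite mul0r (additive_char0 psi_char) //; rewrite sumr_const.
have [t /pidealP[s ->] psi_ys] : exists2 t, t \in pideal y & psi t != 1.
  apply: primitive_char_nonconst; first exact: pideal_ideal.
  apply: contra_neq y_neq0 => y0; apply/set1P; rewrite -y0.
  by apply/pidealP; exists 1; rewrite mulr1.
exact: sum_char_translate_eq0 (psi_scaleD y) _ psi_ys.
Qed.

(* Both sides count |R| times the number of solutions: of x s = a on the left,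
   of r x = 0 on the right, by orthogonality of the characters r |-> psi (r z). *)
Lemma double_annihilator x a :
  (forall t, x * t = 0 -> a * t = 0) -> pideal a \subset pideal x.
Proof.
move=> ann_xa; set A := \sum_(r : R) \sum_(s : R) psi (r * (x * s - a)).
have A_sol : A = #|R|%:R *+ #|[pred s | x * s == a]|.
  rewrite /A exchange_big -sumr_const [RHS]big_mkcond /=; apply: eq_bigr => s _.
  by under eq_bigr do rewrite mulrC; rewrite sum_char_mul subr_eq0 inE.
have A_ann : A = #|R|%:R *+ #|[pred r | r * x == 0]|.
  rewrite /A -sumr_const [RHS]big_mkcond /=; apply: eq_bigr => r _; rewrite inE.
  have split_psi s : psi (r * (x * s - a)) = psi (- (r * a)) * psi ((r * x) * s).
    by rewrite -psiD; congr psi; ring.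
  under eq_bigr do rewrite split_psi.
  rewrite -mulr_sumr sum_char_mul; case: eqP => [rx0|]; last by rewrite mulr0.
  by rewrite [r * a]mulrC ann_xa ?oppr0 ?(additive_char0 psi_char) ?mul1r // mulrC.
have : #|[pred s | x * s == a]| = #|[pred r | r * x == 0]|.
  have R_gt0 : (0 < #|R|)%N by apply/card_gt0P; exists 0.
  apply/eqP; rewrite -(eqn_pmul2l R_gt0) -(@eqr_nat algC) !natrM !mulr_natr.
  by rewrite -A_sol -A_ann.
move=> card_sol; have /card_gt0P[s] : (0 < #|[pred s | (x * s == a)%R]|)%N.
  by rewrite card_sol; apply/card_gt0P; exists 0; rewrite inE mul0r.
by rewrite inE => /eqP<-; apply/pideal_subP; exists s.
Qed.

Lemma char_nonconst_ann a x :
  ~~ (pideal a \subset pideal x) -> exists2 t, x * t = 0 & psi (a * t) != 1.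
Proof.
move=> a_notin_x.
have aI_neq0 : [set a * t | t in [set t | x * t == 0]] != [set 0].
  apply: contra a_notin_x => /eqP ann_a; apply: double_annihilator => t xt.
  by apply/eqP; rewrite -in_set1 -ann_a; apply/imsetP; exists t; rewrite // inE xt.
have [_ /imsetP[t + ->] psi_at] :=
  primitive_char_nonconst (mul_ann_ideal a x) aI_neq0.
by rewrite inE => /eqP xt; exists t.
Qed.

Lemma sum_char_fiber_eq0 a x b :
  ~~ (pideal a \subset pideal x) -> \sum_(c | x * c == b) psi (a * c) = 0.
Proof.
case/char_nonconst_ann=> t xt psi_at.
apply: sum_char_translate_eq0 (psi_scaleD a) _ psi_at => c.
by rewrite mulrDr xt addr0.
Qed.

Lemma sum_units_fibers a b :
  \sum_(u | u \is a GRing.unit) psi (a * u + b * u^-1) =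
  \sum_x \sum_(b1 | x * b1 == b) psi (x + a * b1).
Proof.
rewrite (exchange_big_dep predT) //= [RHS](bigID (fun u => u \is a GRing.unit)) /=.
rewrite [X in _ = _ + X]big1 ?addr0 => [|u u_nonunit].
  apply: eq_bigr => u uU; rewrite (big_pred1 (b * u^-1)) 1?addrC // => x /=.
  by apply/eqP/eqP => [<-|->]; rewrite ?mulrK ?mulrVK.
have [t ut] : exists2 t, u * t = 0 & psi (1 * t) != 1.
  apply: char_nonconst_ann; apply: contra u_nonunit => /pideal_subP[s us].
  by apply/unitrPr; exists s.
rewrite mul1r => psi_t; under eq_bigr do rewrite psiD.
rewrite -mulr_suml (sum_char_translate_eq0 psiD _ psi_t) ?mul0r // => c.
by rewrite mulrDl [t * u]mulrC ut addr0.
Qed.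

Lemma sum_fibers_restrict a b :
  \sum_x \sum_(b1 | x * b1 == b) psi (x + a * b1) =
  \sum_(x | (pideal a \subset pideal x) && (pideal b \subset pideal x))
    \sum_(b1 | x * b1 == b) psi (x + a * b1).
Proof.
rewrite (bigID (fun x => (pideal a \subset pideal x) && (pideal b \subset pideal x))) /=.
rewrite [X in _ + X]big1 ?addr0 // => x.
have [b_in_x|b_notin_x] := boolP (pideal b \subset pideal x); last first.
  move=> _; apply: big_pred0 => b1; apply: contraNF b_notin_x => /eqP <-.
  by apply/pideal_subP; exists b1.
rewrite andbT => a_notin_x; under eq_bigr do rewrite psiD.
by rewrite -mulr_sumr sum_char_fiber_eq0 ?mulr0.
Qed.

End PrimitiveCharacter.

Theorem mainTheorem1 (R : finComUnitRingType) (psi : R -> algC)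
  (hF : Frobenius R) (hpsi : primitive_char psi) (a b : R) :
  (forall (D : {set R}) (d d' a0 b0 a0' b0' : R),
      D = pideal d -> D = pideal d' ->
      a = d * a0 -> b = d * b0 -> a = d' * a0' -> b = d' * b0' ->
      T psi d a0 b0 = T psi d' a0' b0' /\ #|dperp d| = #|dperp d'|) /\
  (forall (gen a0f b0f : {set R} -> R),
      (forall D : {set R}, principal D -> pideal a \subset D -> pideal b \subset D ->
         [/\ D = pideal (gen D), a = gen D * a0f D & b = gen D * b0f D]) ->
      \sum_(u : R | u \is a GRing.unit) psi (a * u + b * u^-1) =
      \sum_(D : {set R} | [&& principal D, pideal a \subset D & pideal b \subset D])
         (#|dperp (gen D)|%:R * T psi (gen D) (a0f D) (b0f D))).
Proof.
split=> [D d d' a0 b0 a0' b0' -> Ed' Ea Eb Ea' Eb'|gen a0f b0f gen_spec].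
  have card_eq : #|dperp d| = #|dperp d'| by rewrite /dperp Ed'.
  split=> //; have dperp_neq0 : (#|dperp d|%:R : algC) != 0.
    by rewrite pnatr_eq0 -lt0n; apply/card_gt0P; exists 0; rewrite dperpP mul0r.
  apply: (mulfI dperp_neq0); rewrite -(sum_generators hpsi.1 Ea Eb) card_eq.
  by rewrite -(sum_generators hpsi.1 Ea' Eb') Ed'.
rewrite (sum_units_fibers hpsi) (sum_fibers_restrict hpsi).
rewrite (partition_big (@pideal R)
  (fun D => [&& principal D, pideal a \subset D & pideal b \subset D])).
  apply: eq_bigr => D /and3P[D_principal aD bD].
  have [ED Ea Eb] := gen_spec D D_principal aD bD.
  rewrite -(sum_generators hpsi.1 Ea Eb) -ED.
  by apply: eq_bigl => x; case: eqP => [->|]; rewrite ?aD ?bD ?andbF.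
by move=> x /andP[ax bx]; rewrite ax bx !andbT; apply/existsP; exists x.
Qed.
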